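(* Under TLMP and stochastic rolling-window dispatch as described in the context, for all realizations of stochastic demands and probabilistic load forecasts, it is optimal for a price-taking ESR $i$ to bid with its true benefit/cost curves and true operational parameters; that is, the truthful bidding parameter $\boldsymbol\theta_i^*$ maximizes $\Pi_i^{TLMP}(\boldsymbol\theta_i)$ over bidding parameters $\boldsymbol\theta_i$.
   Context: Single-bus market with $N$ ESRs over horizon $\mathscr H=\{1,\dots,T\}$. In each interval $t$ the operator solves a scenario-based stochastic dispatch problem over window $\{t,\dots,t+W-1\}$ (minimizing interval-$t$ bid cost plus probability-weighted bid cost over $K$ forecast demand scenarios, subject to power balance with realized demand $d_t$ and forecast scenario demands, SOC transitions $E_{it}-E_{i(t-1)}=\xi^C_ig^C_{it}-g^D_{it}/\xi^D_i$, SOC, power and ramping limits, with initial conditions given by the previously realized dispatch), using the bids submitted by the ESRs; the interval-$t$ solution is the realized dispatch. The TLMP of ESR $i$ in interval $t$ is $\pi_{it}^{TLMP\text{-}C}=\lambda^*_t-\xi_i^{C}\phi^*_{it}-\Delta_{it}^{C*}$ (charging) and $\pi_{it}^{TLMP\text{-}D}=\lambda^*_t-\phi^*_{it}/\xi_i^{D}+\Delta_{it}^{D*}$ (discharging), where $\lambda_t^*$ is the optimal multiplier of the interval-$t$ power balance, $\phi^*_{it}$ that of ESR $i$'s interval-$t$ SOC transition equation, and $\Delta_{it}^{C*}=-(\bar{\mu}_{it}^{C*}-\underline{\mu}_{it}^{C*})+\sum_{k=1}^K(\bar{\mu}_{i(t+1)k}^{C*}-\underline{\mu}_{i(t+1)k}^{C*})$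 with $\bar\mu_{it},\underline\mu_{it}$ the multipliers of the ramp constraints between $t-1$ and $t$ and $\bar\mu_{i(t+1)k},\underline\mu_{i(t+1)k}$ those between $t$ and $t+1$ in scenario $k$ ($\Delta^{D*}_{it}$ analogous). ESR $i$ submits bids parameterized by $\boldsymbol\theta_i=(c_i^{D},c_i^{C},\bar{r}_i^{D},\bar{r}_i^{C},\underline{r}_i^{D},\underline{r}_i^{C},\bar{E}_i,\underline{E}_i,\bar{g}_i^{D},\bar{g}_i^{C},\underline{g}_i^{D},\underline{g}_i^{C})$ (bid-in marginal costs, ramp limits, SOC limits, power limits), giving bid curves $f^C_{it}(\cdot|\boldsymbol\theta_i),f^D_{it}(\cdot|\boldsymbol\theta_i)$; $\boldsymbol\theta_i^*$ denotes the true parameters, and the true benefit/cost curves are $q^C_{it}=f^C_{it}(\cdot|\boldsymbol\theta_i^* )$, $q^D_{it}=f^D_{it}(\cdot|\boldsymbol\theta_i^* )$. Let $g^{C*}_{it}(\boldsymbol\theta_i),g^{D*}_{it}(\boldsymbol\theta_i)$ be the resulting dispatch. Price-taking: the ESR treats the TLMP sequence as fixed (independent of $\boldsymbol\theta_i$) and evaluates the profit $\Pi_i^{TLMP}(\boldsymbol\theta_i)=\sum_{t=1}^T\big(\pi_{it}^{TLMP\text{-}D}g_{it}^{D*}(\boldsymbol\theta_i)-\pi_{it}^{TLMP\text{-}C}g_{it}^{C*}(\boldsymbol\theta_i)-q_{it}^{D}(g^{D*}_{it}(\boldsymbol\theta_i))+q_{it}^{C}(g^{C*}_{it}(\boldsymbol\theta_i))\big)$;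 the ESR requires its dispatch to lie in its true feasible operating region (true ramp, SOC and power limits), since otherwise it cannot follow the dispatch. *)

From HB Require Import structures.
From mathcomp Require Import all_boot all_order all_algebra.
Set Implicit Arguments. Unset Strict Implicit. Unset Printing Implicit Defensive.
Import Order.TTheory GRing.Theory Num.Theory.
Local Open Scope ring_scope.

(* Kinds of inequality constraints of an ESR at one node (written "<= 0"):
   ramp-up/down of charging and discharging, SOC upper/lower, power upper/lower. *)
Inductive ineq := RCu | RCl | RDu | RDl | SEu | SEl | PCu | PCl | PDu | PDl.
Definition ineqs : seq ineq := [:: RCu; RCl; RDu; RDl; SEu; SEl; PCu; PCl; PDu; PDl].

Section Market.
Variable R : realFieldType.

Record bid := Bid {
  cD : R; cC : R; rDu : R; rCu : R; rDl : R; rCl : R;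
  Eu : R; El : R; gDu : R; gCu : R; gDl : R; gCl : R }.

Definition fD (b : bid) (g : R) : R := cD b * g.
Definition fC (b : bid) (g : R) : R := cC b * g.

Definition ineq_val (b : bid) (q : ineq) (gC gD E gCp gDp : R) : R :=
  match q with
  | RCu => gC - gCp - rCu b
  | RCl => gCp - gC - rCl b
  | RDu => gD - gDp - rDu b
  | RDl => gDp - gD - rDl b
  | SEu => E - Eu b
  | SEl => El b - E
  | PCu => gC - gCu b
  | PCl => gCl b - gC
  | PDu => gD - gDu b
  | PDl => gDl b - gD
  end.

Definition soc_val (xc xd E Ep gC gD : R) : R := E - Ep - xc * gC + gD / xd.

Variables N K : nat.

(* decision variables of the interval-t window problem: interval t (index 0)
   and scenario k, interval t+s (1 <= s <= W-1) *)
Record wvar := WVar {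
  gC0 : 'I_N -> R; gD0 : 'I_N -> R; E0 : 'I_N -> R;
  gCs : 'I_N -> 'I_K -> nat -> R; gDs : 'I_N -> 'I_K -> nat -> R;
  Es : 'I_N -> 'I_K -> nat -> R }.

(* multipliers: power balances, SOC transitions, inequality constraints *)
Record wmult := WMult {
  lam0 : R; lams : 'I_K -> nat -> R;
  phi0 : 'I_N -> R; phis : 'I_N -> 'I_K -> nat -> R;
  mu0 : ineq -> 'I_N -> R; mus : ineq -> 'I_N -> 'I_K -> nat -> R }.

Record wdata := WData {
  bids : 'I_N -> bid; xiC : 'I_N -> R; xiD : 'I_N -> R; win : nat;
  dem : R;                    (* realized demand d_t *)
  fdem : 'I_K -> nat -> R;    (* forecast demand of scenario k at t+s *)
  prob : 'I_K -> R;
  gCp : 'I_N -> R; gDp : 'I_N -> R; Ep : 'I_N -> R (* realized at t-1 *) }.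

Definition ngC (x : wvar) i k (s : nat) := if s == 0%N then gC0 x i else gCs x i k s.
Definition ngD (x : wvar) i k (s : nat) := if s == 0%N then gD0 x i else gDs x i k s.
Definition nE (x : wvar) i k (s : nat) := if s == 0%N then E0 x i else Es x i k s.

Definition obj (D : wdata) (x : wvar) : R :=
  \sum_(i < N) (fD (bids D i) (gD0 x i) - fC (bids D i) (gC0 x i))
  + \sum_(k < K) prob D k * \sum_(1 <= s < win D)
       \sum_(i < N) (fD (bids D i) (gDs x i k s) - fC (bids D i) (gCs x i k s)).

Definition bal0 (D : wdata) (x : wvar) : R :=
  dem D - \sum_(i < N) (gD0 x i - gC0 x i).
Definition bals (D : wdata) (x : wvar) k s : R :=
  fdem D k s - \sum_(i < N) (gDs x i k s - gCs x i k s).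
Definition soc0 (D : wdata) (x : wvar) i : R :=
  soc_val (xiC D i) (xiD D i) (E0 x i) (Ep D i) (gC0 x i) (gD0 x i).
Definition socs (D : wdata) (x : wvar) i k s : R :=
  soc_val (xiC D i) (xiD D i) (Es x i k s) (nE x i k s.-1) (gCs x i k s) (gDs x i k s).
Definition con0 (D : wdata) (x : wvar) q i : R :=
  ineq_val (bids D i) q (gC0 x i) (gD0 x i) (E0 x i) (gCp D i) (gDp D i).
Definition cons (D : wdata) (x : wvar) q i k s : R :=
  ineq_val (bids D i) q (gCs x i k s) (gDs x i k s) (Es x i k s)
           (ngC x i k s.-1) (ngD x i k s.-1).

Definition feasible (D : wdata) (x : wvar) : Prop :=
  bal0 D x = 0 /\
  (forall k s, (1 <= s < win D)%N -> bals D x k s = 0) /\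
  (forall i, soc0 D x i = 0) /\
  (forall i k s, (1 <= s < win D)%N -> socs D x i k s = 0) /\
  (forall q i, con0 D x q i <= 0) /\
  (forall q i k s, (1 <= s < win D)%N -> cons D x q i k s <= 0).

Definition optimal (D : wdata) (x : wvar) : Prop :=
  feasible D x /\ forall x', feasible D x' -> obj D x <= obj D x'.

Definition lagr (D : wdata) (x : wvar) (y : wmult) : R :=
  obj D x + lam0 y * bal0 D x
  + \sum_(k < K) \sum_(1 <= s < win D) lams y k s * bals D x k s
  + \sum_(i < N) phi0 y i * soc0 D x i
  + \sum_(i < N) \sum_(k < K) \sum_(1 <= s < win D) phis y i k s * socs D x i k s
  + \sum_(q <- ineqs) (\sum_(i < N) mu0 y q i * con0 D x q i
      + \sum_(i < N) \sum_(k < K) \sum_(1 <= s < win D) mus y q i k s * cons D x q i k s).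

Definition dual_feas (D : wdata) (y : wmult) : Prop :=
  (forall q i, 0 <= mu0 y q i) /\
  (forall q i k s, (1 <= s < win D)%N -> 0 <= mus y q i k s).

(* (x, y) is an optimal primal-dual pair: saddle point of the Lagrangian *)
Definition saddle (D : wdata) (x : wvar) (y : wmult) : Prop :=
  [/\ dual_feas D y,
      forall x', lagr D x y <= lagr D x' y &
      forall y', dual_feas D y' -> lagr D x y' <= lagr D x y].

Definition realgC (gCi : 'I_N -> R) (sol : nat -> wvar) (t : nat) i : R :=
  if t == 0%N then gCi i else gC0 (sol t) i.
Definition realgD (gDi : 'I_N -> R) (sol : nat -> wvar) (t : nat) i : R :=
  if t == 0%N then gDi i else gD0 (sol t) i.
Definition realE (Ei : 'I_N -> R) (sol : nat -> wvar) (t : nat) i : R :=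
  if t == 0%N then Ei i else E0 (sol t) i.

Definition wdata_at (Th : 'I_N -> bid) (xc xd : 'I_N -> R) (W : nat)
  (d : nat -> R) (dh : nat -> 'I_K -> nat -> R) (pr : nat -> 'I_K -> R)
  (gCi gDi Ei : 'I_N -> R) (sol : nat -> wvar) (t : nat) : wdata :=
  WData Th xc xd W (d t) (dh t) (pr t)
    (realgC gCi sol t.-1) (realgD gDi sol t.-1) (realE Ei sol t.-1).

Definition rolling_opt Th xc xd W d dh pr gCi gDi Ei (T : nat) (sol : nat -> wvar) :=
  forall t, (1 <= t <= T)%N -> optimal (wdata_at Th xc xd W d dh pr gCi gDi Ei sol t) (sol t).

Definition rolling_saddle Th xc xd W d dh pr gCi gDi Ei (T : nat)
  (sol : nat -> wvar) (mult : nat -> wmult) :=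
  forall t, (1 <= t <= T)%N ->
    saddle (wdata_at Th xc xd W d dh pr gCi gDi Ei sol t) (sol t) (mult t).

(* Delta^C, Delta^D (scenario ramp terms only exist if W >= 2) *)
Definition DeltaC (W : nat) (y : wmult) i : R :=
  - (mu0 y RCu i - mu0 y RCl i)
  + (if (1 < W)%N then \sum_(k < K) (mus y RCu i k 1 - mus y RCl i k 1) else 0).
Definition DeltaD (W : nat) (y : wmult) i : R :=
  - (mu0 y RDu i - mu0 y RDl i)
  + (if (1 < W)%N then \sum_(k < K) (mus y RDu i k 1 - mus y RDl i k 1) else 0).

Definition tlmpC (xc : 'I_N -> R) (W : nat) (y : wmult) i : R :=
  lam0 y - xc i * phi0 y i - DeltaC W y i.
Definition tlmpD (xd : 'I_N -> R) (W : nat) (y : wmult) i : R :=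
  lam0 y - phi0 y i / xd i + DeltaD W y i.

Definition upd (Th : 'I_N -> bid) (i : 'I_N) (b : bid) : 'I_N -> bid :=
  fun j => if j == i then b else Th j.

End Market.

Definition truly_feasible (R : realFieldType) (b : bid R) (xc xd gCi gDi Ei : R)
  (T : nat) (gC gD E : nat -> R) : Prop :=
  let pC t := if t == 0%N then gCi else gC t in
  let pD t := if t == 0%N then gDi else gD t in
  let pE t := if t == 0%N then Ei else E t in
  forall t, (1 <= t <= T)%N ->
    (forall q, ineq_val b q (gC t) (gD t) (E t) (pC t.-1) (pD t.-1) <= 0)
    /\ soc_val xc xd (E t) (pE t.-1) (gC t) (gD t) = 0.

(* Pi_i^{TLMP}, with true curves q^D = f^D at theta_star, q^C = f^C at theta_star *)
Definition profit (R : realFieldType) (bstar : bid R) (piC piD : nat -> R) (T : nat)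
  (gC gD : nat -> R) : R :=
  \sum_(1 <= t < T.+1)
    (piD t * gD t - piC t * gC t - fD bstar (gD t) + fC bstar (gC t)).

From HB Require Import structures.
From mathcomp Require Import all_boot all_order all_algebra ring.
Set Implicit Arguments. Unset Strict Implicit. Unset Printing Implicit Defensive.
Import Order.TTheory GRing.Theory Num.Theory.
Local Open Scope ring_scope.

(* Fix an interval t and a saddle point (x, y) of the truthful window problem.
   The Lagrangian at y is affine in ESR i's interval-t charging and discharging
   powers, and the TLMPs collect exactly the balance, SOC and ramp multipliers in
   its two slopes; what remains is the true bid cost and the power-limit
   multipliers.  Since x minimizes the Lagrangian, moving just these two powers to
   the values (a, b) dispatched under any other bid cannot decrease it, so the
   interval-profit loss of (a, b) is bounded below by power-limit multiplier terms,
   which are nonnegative by complementary slackness once (a, b) respects the true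
   power limits. *)

Lemma sumr_update (I : finType) (V : zmodType) (F G : I -> V) (i : I) :
  (forall j, j != i -> F j = G j) -> \sum_j F j = \sum_j G j + (F i - G i).
Proof.
move=> FG; rewrite (bigD1 i) // [in RHS](bigD1 i) //= (eq_bigr _ (fun j => FG j)).
by rewrite [RHS]addrAC addrCA subrr addr0.
Qed.

Arguments sumr_update {I V F} G i.

Definition ineq_code (q : ineq) : nat :=
  match q with RCu => 0 | RCl => 1 | RDu => 2 | RDl => 3 | SEu => 4 | SEl => 5
  | PCu => 6 | PCl => 7 | PDu => 8 | PDl => 9 end.

Lemma ineq_code_inj : injective ineq_code.
Proof. by case; case. Qed.

HB.instance Definition _ := Equality.copy ineq (inj_type ineq_code_inj).

Section Constraints.
Variable R : realFieldType.

Definition ineq_dgC (q : ineq) : R :=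
  match q with RCu | PCu => 1 | RCl | PCl => -1 | _ => 0 end.
Definition ineq_dgD (q : ineq) : R :=
  match q with RDu | PDu => 1 | RDl | PDl => -1 | _ => 0 end.
Definition ineq_dgCp (q : ineq) : R :=
  match q with RCu => -1 | RCl => 1 | _ => 0 end.
Definition ineq_dgDp (q : ineq) : R :=
  match q with RDu => -1 | RDl => 1 | _ => 0 end.

Lemma ineq_valB_cur (b : bid R) q gC gD gC' gD' E gCp gDp :
  ineq_val b q gC' gD' E gCp gDp - ineq_val b q gC gD E gCp gDp
  = ineq_dgC q * (gC' - gC) + ineq_dgD q * (gD' - gD).
Proof. by case: q => /=; ring. Qed.

Lemma ineq_valB_prev (b : bid R) q gC gD E gCp gDp gCp' gDp' :
  ineq_val b q gC gD E gCp' gDp' - ineq_val b q gC gD E gCp gDp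
  = ineq_dgCp q * (gCp' - gCp) + ineq_dgDp q * (gDp' - gDp).
Proof. by case: q => /=; ring. Qed.

Lemma ineq_val_power_bounds (b : bid R) gC gD E gCp gDp :
  (forall q, ineq_val b q gC gD E gCp gDp <= 0) ->
  gCl b <= gC <= gCu b /\ gDl b <= gD <= gDu b.
Proof.
move=> feas; have := feas PCu; have := feas PCl; have := feas PDu; have := feas PDl.
by rewrite /= !subr_le0 => -> -> -> ->.
Qed.

End Constraints.

Arguments ineq_dgC {R} q.
Arguments ineq_dgD {R} q.
Arguments ineq_dgCp {R} q.
Arguments ineq_dgDp {R} q.

Section Perturbation.
Variables (R : realFieldType) (N K : nat).

(* Only the powers move, so the SOC transitions of the result may fail: it is
   compared with x through the Lagrangian, never through feasibility. *)
Definition set_power0 (x : wvar R N K) (i : 'I_N) (a b : R) : wvar R N K :=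
  WVar (fun j => if j == i then a else gC0 x j) (fun j => if j == i then b else gD0 x j)
    (E0 x) (gCs x) (gDs x) (Es x).

Definition ineq_terms (D : wdata R N K) (x : wvar R N K) (y : wmult R N K) (q : ineq) : R :=
  \sum_(j < N) mu0 y q j * con0 D x q j
  + \sum_(j < N) \sum_(k < K) \sum_(1 <= s < win D) mus y q j k s * cons D x q j k s.

Variables (D : wdata R N K) (x : wvar R N K) (y : wmult R N K) (i : 'I_N) (a b : R).
Local Notation x' := (set_power0 x i a b).
Local Notation dC := (a - gC0 x i).
Local Notation dD := (b - gD0 x i).

Lemma obj_set_power0 :
  obj D x' = obj D x + (cD (bids D i) * dD - cC (bids D i) * dC).
Proof.
rewrite /obj (sumr_update (fun j => fD (bids D j) (gD0 x j) - fC (bids D j) (gC0 x j)) i).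
  by rewrite /= eqxx /fD /fC; ring.
by move=> j /negbTE /= ->.
Qed.

Lemma bal0_set_power0 : bal0 D x' = bal0 D x - (dD - dC).
Proof.
rewrite /bal0 (sumr_update (fun j => gD0 x j - gC0 x j) i).
  by rewrite /= eqxx; ring.
by move=> j /negbTE /= ->.
Qed.

Lemma soc0_set_power0 :
  \sum_(j < N) phi0 y j * soc0 D x' j
  = \sum_(j < N) phi0 y j * soc0 D x j + phi0 y i * (dD / xiD D i - xiC D i * dC).
Proof.
rewrite (sumr_update (fun j => phi0 y j * soc0 D x j) i).
  by rewrite /soc0 /soc_val /= eqxx; ring.
by move=> j /negbTE; rewrite /soc0 /= => ->.
Qed.

Lemma con0_set_power0 q :
  \sum_(j < N) mu0 y q j * con0 D x' q j
  = \sum_(j < N) mu0 y q j * con0 D x q j + mu0 y q i * (ineq_dgC q * dC + ineq_dgD q * dD).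
Proof.
rewrite (sumr_update (fun j => mu0 y q j * con0 D x q j) i).
  by rewrite -mulrBr /con0 /= eqxx ineq_valB_cur.
by move=> j /negbTE; rewrite /con0 /= => ->.
Qed.

Lemma cons_set_power0 q :
  \sum_(j < N) \sum_(k < K) \sum_(1 <= s < win D) mus y q j k s * cons D x' q j k s
  = \sum_(j < N) \sum_(k < K) \sum_(1 <= s < win D) mus y q j k s * cons D x q j k s
    + (if (1 < win D)%N
       then (\sum_(k < K) mus y q i k 1) * (ineq_dgCp q * dC + ineq_dgDp q * dD) else 0).
Proof.
rewrite (@sumr_update _ _ _
  (fun j => \sum_(k < K) \sum_(1 <= s < win D) mus y q j k s * cons D x q j k s) i); last first.
  move=> j /negbTE ji; apply: eq_bigr => k _; apply: eq_bigr => s _.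
  by rewrite /cons /ngC /ngD /= ji.
congr (_ + _); rewrite -sumrB; case: ltnP => [W2 | W1]; last first.
  by rewrite big1 // => k _; rewrite !big_geq // subrr.
rewrite mulr_suml; apply: eq_bigr => k _.
rewrite (big_ltn W2) [X in _ - X](big_ltn W2).
have -> : \sum_(2 <= s < win D) mus y q i k s * cons D x' q i k s
        = \sum_(2 <= s < win D) mus y q i k s * cons D x q i k s.
  apply: eq_big_nat => s /andP [s2 _].
  by rewrite /cons /ngC /ngD /=; case: s s2 => [|[|s]].
by rewrite opprD addrACA subrr addr0 -mulrBr /cons /ngC /ngD /= eqxx ineq_valB_prev.
Qed.

Lemma ineq_terms_set_power0 :
  \sum_(q <- ineqs) ineq_terms D x' y q
  = \sum_(q <- ineqs) ineq_terms D x y q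
    + dC * (mu0 y PCu i - mu0 y PCl i - DeltaC (win D) y i)
    + dD * (mu0 y PDu i - mu0 y PDl i - DeltaD (win D) y i).
Proof.
under eq_bigr do rewrite /ineq_terms con0_set_power0 cons_set_power0 addrACA.
rewrite big_split /= -!addrA; congr (_ + _).
rewrite /ineqs /DeltaC /DeltaD !big_cons big_nil /=.
by case: (1 < win D)%N; rewrite ?sumrB; ring.
Qed.

Lemma lagr_set_power0 :
  lagr D x' y = lagr D x y
  + dC * (tlmpC (xiC D) (win D) y i - cC (bids D i) + (mu0 y PCu i - mu0 y PCl i))
  + dD * (cD (bids D i) - tlmpD (xiD D) (win D) y i + (mu0 y PDu i - mu0 y PDl i)).
Proof.
have := ineq_terms_set_power0; rewrite /ineq_terms => ineqE.
rewrite /lagr obj_set_power0 bal0_set_power0 soc0_set_power0 ineqE /tlmpC /tlmpD.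
ring.
Qed.

End Perturbation.

Section SaddlePoint.
Variables (R : realFieldType) (N K : nat).

Definition set_mu0 (y : wmult R N K) (q0 : ineq) (j0 : 'I_N) (m : R) : wmult R N K :=
  WMult (lam0 y) (lams y) (phi0 y) (phis y)
    (fun q j => if (q == q0) && (j == j0) then m else mu0 y q j) (mus y).

Lemma lagr_set_mu0 D x y q0 j0 m :
  lagr D x (set_mu0 y q0 j0 m) = lagr D x y + (m - mu0 y q0 j0) * con0 D x q0 j0.
Proof.
have muE q : \sum_(j < N) mu0 (set_mu0 y q0 j0 m) q j * con0 D x q j
    = \sum_(j < N) mu0 y q j * con0 D x q j
      + (if q == q0 then (m - mu0 y q0 j0) * con0 D x q0 j0 else 0).
  rewrite (sumr_update (fun j => mu0 y q j * con0 D x q j) j0); last first.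
    by move=> j /negbTE ji; rewrite /= ji andbF.
  by rewrite /= eqxx andbT; case: eqP => [-> | _]; rewrite ?mulrBl ?subrr.
have ineqE : \sum_(q <- ineqs) ineq_terms D x (set_mu0 y q0 j0 m) q
    = \sum_(q <- ineqs) ineq_terms D x y q + (m - mu0 y q0 j0) * con0 D x q0 j0.
  under eq_bigr do rewrite /ineq_terms muE addrAC.
  rewrite big_split /=; congr (_ + _).
  by case: q0 {muE}; rewrite /ineqs !big_cons big_nil /= ?addr0 ?add0r.
by move: ineqE; rewrite /ineq_terms /lagr /= => ->; rewrite addrA.
Qed.

Lemma dual_feas_set_mu0 D y q0 j0 m :
  0 <= m -> dual_feas D y -> dual_feas D (set_mu0 y q0 j0 m).
Proof. by move=> m0 [mu0_ge0 mus_ge0]; split=> // q j /=; case: ifP. Qed.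

Variables (D : wdata R N K) (x : wvar R N K) (y : wmult R N K).
Hypothesis xy : saddle D x y.

Lemma saddle_mu0_ge0 q j : 0 <= mu0 y q j.
Proof. by case: xy => -[]. Qed.

Lemma saddle_con0_le0 q j : con0 D x q j <= 0.
Proof.
case: xy => yfeas _ ymax.
have := ymax _ (dual_feas_set_mu0 q j (addr_ge0 (saddle_mu0_ge0 q j) ler01) yfeas).
by rewrite lagr_set_mu0 [mu0 y q j + 1]addrC addrK mul1r gerDl.
Qed.

Lemma saddle_compl_slack q j : mu0 y q j * con0 D x q j = 0.
Proof.
case: xy => yfeas _ ymax; apply/eqP; rewrite eq_le.
rewrite mulr_ge0_le0 ?saddle_mu0_ge0 ?saddle_con0_le0 //=.
have := ymax _ (dual_feas_set_mu0 q j (lexx 0) yfeas).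
by rewrite lagr_set_mu0 sub0r mulNr gerDl oppr_le0.
Qed.

Lemma saddle_first_order i a b :
  0 <= (a - gC0 x i) * (tlmpC (xiC D) (win D) y i - cC (bids D i) + (mu0 y PCu i - mu0 y PCl i))
     + (b - gD0 x i) * (cD (bids D i) - tlmpD (xiD D) (win D) y i + (mu0 y PDu i - mu0 y PDl i)).
Proof.
case: xy => _ xmin _; have := xmin (set_power0 x i a b).
by rewrite lagr_set_power0 -addrA lerDl.
Qed.

Definition interval_profit (bstar : bid R) (piC piD gC gD : R) : R :=
  piD * gD - piC * gC - fD bstar gD + fC bstar gC.

Lemma saddle_interval_profit_max bstar i a b :
  bids D i = bstar -> gCl bstar <= a <= gCu bstar -> gDl bstar <= b <= gDu bstar ->
  interval_profit bstar (tlmpC (xiC D) (win D) y i) (tlmpD (xiD D) (win D) y i) a b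
  <= interval_profit bstar (tlmpC (xiC D) (win D) y i) (tlmpD (xiD D) (win D) y i)
       (gC0 x i) (gD0 x i).
Proof.
move=> bid_i /andP [aCl aCu] /andP [bDl bDu].
set piC := tlmpC _ _ y i; set piD := tlmpD _ _ y i.
have := saddle_first_order i a b; rewrite bid_i; set fo := (X in 0 <= X) => fo_ge0.
rewrite -subr_ge0.
have -> : interval_profit bstar piC piD (gC0 x i) (gD0 x i) - interval_profit bstar piC piD a b
  = fo + mu0 y PCu i * (gCu bstar - a) + mu0 y PCl i * (a - gCl bstar)
       + mu0 y PDu i * (gDu bstar - b) + mu0 y PDl i * (b - gDl bstar)
    + (mu0 y PCu i * con0 D x PCu i + mu0 y PCl i * con0 D x PCl i
       + mu0 y PDu i * con0 D x PDu i + mu0 y PDl i * con0 D x PDl i).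
  by rewrite /fo /piC /piD /interval_profit /fD /fC /con0 bid_i /=; ring.
rewrite !saddle_compl_slack !addr0; clearbody fo.
by rewrite !addr_ge0 //; rewrite mulr_ge0 ?saddle_mu0_ge0 ?subr_ge0.
Qed.

End SaddlePoint.

Theorem theorem3 (R : realFieldType) (N K T W : nat) (i : 'I_N)
  (Th : 'I_N -> bid R) (thstar th : bid R) (xc xd : 'I_N -> R)
  (d : nat -> R) (dh : nat -> 'I_K -> nat -> R) (pr : nat -> 'I_K -> R)
  (gCi gDi Ei : 'I_N -> R)
  (sol0 : nat -> wvar R N K) (mult0 : nat -> wmult R N K)
  (sol1 : nat -> wvar R N K) :
  (0 < W)%N ->
  (forall j, 0 < xc j) -> (forall j, 0 < xd j) ->
  (forall t k, 0 <= pr t k) -> (forall t, \sum_(k < K) pr t k = 1) ->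
  (* truthful bid theta_i^*: realized dispatch sol0 with optimal multipliers mult0 *)
  rolling_saddle (upd Th i thstar) xc xd W d dh pr gCi gDi Ei T sol0 mult0 ->
  (* arbitrary bid theta_i: realized dispatch sol1 *)
  rolling_opt (upd Th i th) xc xd W d dh pr gCi gDi Ei T sol1 ->
  (* the resulting dispatch of ESR i lies in its true feasible operating region *)
  truly_feasible thstar (xc i) (xd i) (gCi i) (gDi i) (Ei i) T
    (fun t => gC0 (sol1 t) i) (fun t => gD0 (sol1 t) i) (fun t => E0 (sol1 t) i) ->
  profit thstar (fun t => tlmpC xc W (mult0 t) i) (fun t => tlmpD xd W (mult0 t) i) T
    (fun t => gC0 (sol1 t) i) (fun t => gD0 (sol1 t) i)
  <= profit thstar (fun t => tlmpC xc W (mult0 t) i) (fun t => tlmpD xd W (mult0 t) i) T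
    (fun t => gC0 (sol0 t) i) (fun t => gD0 (sol0 t) i).
Proof.
move=> _ _ _ _ _ truthful_saddle _ true_feas.
apply: ler_sum_nat => t /andP [t_ge1 t_leT].
have t_in : (1 <= t <= T)%N by rewrite t_ge1 -ltnS.
have [limits _] := true_feas t t_in.
have [powC powD] := ineq_val_power_bounds limits.
apply: (saddle_interval_profit_max (truthful_saddle t t_in) _ powC powD).
by rewrite /= /upd eqxx.
Qed.
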